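(* Let $n\ge 1$, $s\in\{1,\dots,n\}$, let $C\in\mathbb{R}^{n\times n}$ be symmetric positive definite, and let $z^*=\max\{\log\det(C_{S,S}) : S\subseteq\{1,\dots,n\},\ |S|=s\}$. Then for every $t$ with $0\le t\le\lambda_{\min}(C)$, $$z^*=\max\Big\{\widehat{\Phi}_s\big(M_t(x);t\big) : x\in\{0,1\}^n,\ \textstyle\sum_{i=1}^n x_i=s\Big\}.$$
   Context: $\log$ is natural, $C_{S,S}$ is the principal submatrix of $C$ indexed by $S$, and $\lambda_{\min}(C)$ is the smallest eigenvalue of $C$. For $0\le t\le\lambda_{\min}(C)$ let $A(t)\in\mathbb{R}^{n\times n}$ be a Cholesky factor of $C-tI$ (so $C-tI=A(t)^\top A(t)$), with $i$-th column $a_i(t)$, and for $x\in[0,1]^n$ put $M_t(x)=\sum_i x_i a_i(t)a_i(t)^\top$. For a positive semidefinite $X$ with eigenvalues $\lambda_1(X)\ge\dots\ge\lambda_n(X)$, let $\Phi_s(X;t)=\sum_{i=1}^s\log(\lambda_i(X)+t)$. $\widehat{\Phi}_s(\cdot\,;t)$ is the concave envelope of $\Phi_s(\cdot\,;t)$ on the cone of $n\times n$ positive semidefinite matrices, i.e. the pointwise infimum of all concave functions there that are $\ge\Phi_s(\cdot\,;t)$. *)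

From HB Require Import structures.
From mathcomp Require Import all_boot all_order all_algebra.
From mathcomp Require Import boolp classical_sets reals constructive_ereal ereal.
From mathcomp Require Import exp.

Set Implicit Arguments.
Unset Strict Implicit.
Unset Printing Implicit Defensive.

Import Order.TTheory GRing.Theory Num.Theory.
Local Open Scope ring_scope.

Section Defs.
Variable R : realType.

Definition symmetric_mx n (X : 'M[R]_n) : Prop := X^T = X.

Definition psd n (X : 'M[R]_n) : Prop :=
  symmetric_mx X /\ forall v : 'cV[R]_n, 0 <= (v^T *m X *m v) 0 0.

Definition pd n (X : 'M[R]_n) : Prop :=
  symmetric_mx X /\ forall v : 'cV[R]_n, v != 0 -> 0 < (v^T *m X *m v) 0 0.

Definition spectrum n (X : 'M[R]_n) (l : seq R) : Prop :=
  [/\ size l = n, sorted (fun a b => b <= a) l &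
      char_poly X = \prod_(a <- l) ('X - a%:P)].

(* the sorted eigenvalue list (meaningful for symmetric real X) *)
Definition eigs n (X : 'M[R]_n) : seq R := xget [::] (spectrum X).

(* lambda_i(X), 1-based index i *)
Definition eigval n (X : 'M[R]_n) (i : nat) : R := nth 0 (eigs X) i.-1.

Definition lambda_min n (X : 'M[R]_n) : R := eigval X n.

Definition elog (x : R) : \bar R := if 0 < x then (ln x)%:E else -oo%E.

Definition Phi n (s : nat) (X : 'M[R]_n) (t : R) : \bar R :=
  (\sum_(1 <= i < s.+1) elog (eigval X i + t))%E.

Definition concave_on_psd n (f : 'M[R]_n -> \bar R) : Prop :=
  forall X Y : 'M[R]_n, psd X -> psd Y -> forall l : R, 0 < l < 1 ->
    (l%:E * f X + (1 - l)%:E * f Y <= f (l *: X + (1 - l) *: Y)%R)%E.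

(* concave envelope of Phi_s(.; t) on the PSD cone: pointwise infimum of all
   concave functions on the PSD cone that majorize Phi_s(.; t) there *)
Definition Phi_hat n (s : nat) (X : 'M[R]_n) (t : R) : \bar R :=
  ereal_inf [set f X | f in [set f : 'M[R]_n -> \bar R |
     concave_on_psd f /\ forall Y : 'M[R]_n, psd Y -> (Phi s Y t <= f Y)%E]].

Definition cholesky_factor n (B A : 'M[R]_n) : Prop :=
  [/\ forall i j : 'I_n, (j < i)%N -> A i j = 0,
      forall i : 'I_n, 0 <= A i i &
      B = A^T *m A].

Definition Mx n (A : 'M[R]_n) (x : 'I_n -> R) : 'M[R]_n :=
  \sum_(i < n) x i *: (col i A *m (col i A)^T).

Definition principal_submx n (C : 'M[R]_n) (S : {set 'I_n}) : 'M[R]_#|S| :=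
  \matrix_(i < #|S|, j < #|S|) C (enum_val i) (enum_val j).

Definition zstar n (C : 'M[R]_n) (s : nat) : \bar R :=
  (\big[maxe/-oo]_(S : {set 'I_n} | #|S| == s)
      elog (\det (principal_submx C S)))%E.

Definition rhs_max n (A : 'M[R]_n) (s : nat) (t : R) : \bar R :=
  (\big[maxe/-oo]_(b : {ffun 'I_n -> bool} | (\sum_(i < n) b i == s)%N)
      Phi_hat s (Mx A (fun i => (b i)%:R)) t)%E.

End Defs.

From HB Require Import structures.
From mathcomp Require Import all_boot all_order all_algebra.
From mathcomp Require Import boolp classical_sets reals constructive_ereal ereal.
From mathcomp Require Import exp.
From mathcomp Require Import perm complex spectral sesquilinear lra ring.
Import Order.TTheory GRing.Theory Num.Theory.
Local Open Scope ring_scope.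
Set Implicit Arguments. Unset Strict Implicit. Unset Printing Implicit Defensive.

(* Fix S with |S| = s and let B be the columns of A(t) indexed by S, so that
   M_t(1_S) = B B^T and B^T B = C_{S,S} - tI.  The spectrum of B B^T is that of
   B^T B padded with zeros, hence Phi_s(M_t(1_S); t) = log det C_{S,S}, and the
   envelope is at least this value.  Conversely, for tau > t diagonalise
   M_t(1_S) = V^* diag(e) V and put G = V^* diag(1/(e + tau)) V.  For any PSD
   Y = U^* diag(r) U the weights |W_kj|^2, W = V U^*, are doubly stochastic;
   averaging the tangent bound log a <= log b + a/b - 1 with them shows that
   Y |-> tr(G Y) + kappa is an affine, hence concave, majorant of Phi_s, whose
   value at M_t(1_S) exceeds log det C_{S,S} by O(tau - t). *)

Section CharPoly.
Variable F : comNzRingType.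

Lemma char_poly_conj n (Q D P : 'M[F]_n) :
  Q *m P = 1%:M -> char_poly (Q *m D *m P) = char_poly D.
Proof.
move=> QP; rewrite /char_poly.
have -> : char_poly_mx (Q *m D *m P) =
    map_mx polyC Q *m char_poly_mx D *m map_mx polyC P.
  rewrite /char_poly_mx mulmxBr mulmxBl -!map_mxM; congr (_ - _).
  by rewrite -mulmxA -scalar_mxC mulmxA -map_mxM QP map_mx1 mul1mx.
rewrite !det_mulmx mulrC mulrA -det_mulmx -map_mxM.
by rewrite (mulmx1C QP) map_mx1 det1 mul1r.
Qed.

Lemma char_poly_diag n (d : 'rV[F]_n) :
  char_poly (diag_mx d) = \prod_(i < n) ('X - (d 0 i)%:P).
Proof.
rewrite char_poly_trig ?diag_mx_is_trig //; apply: eq_bigr => i _.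
by rewrite mxE eqxx mulr1n.
Qed.

Lemma horner_char_poly n (K : 'M[F]_n) a : (char_poly K).[a] = \det (a%:M - K).
Proof.
rewrite -horner_evalE /char_poly -det_map_mx; congr (\det _).
apply/matrixP => i j; rewrite !mxE /= rmorphB rmorphMn /= !horner_evalE.
by rewrite hornerX hornerC.
Qed.

Lemma det_add_scalar n (K : 'M[F]_n) (l : seq F) t :
  char_poly K = \prod_(x <- l) ('X - x%:P) -> \det (K + t%:M) = \prod_(x <- l) (x + t).
Proof.
move=> cK; have size_l : size l = n.
  by apply: succn_inj; rewrite -(size_char_poly K) cK size_prod_XsubC.
have := horner_char_poly K (- t).
have -> : (- t)%:M - K = (-1) *: (K + t%:M) by rewrite scaleN1r opprD raddfN addrC.
rewrite cK horner_prod detZ (big_nth 0) big_mkord size_l.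
rewrite (eq_bigr (fun i : 'I_n => - (l`_i + t))) => [|i _]; last first.
  by rewrite hornerXsubC opprD addrC.
rewrite prodrN card_ord => /(congr1 ( *%R ((-1) ^+ n))); rewrite !signrMK => <-.
by rewrite [RHS](big_nth 0) big_mkord size_l.
Qed.

(* Sylvester's identity, from the two block factorisations of [[X, B], [B', 1]]. *)
Lemma char_poly_mulmxC m n (B : 'M[F]_(m, n)) (B' : 'M[F]_(n, m)) : (n <= m)%N ->
  char_poly (B *m B') = char_poly (B' *m B) * 'X^(m - n).
Proof.
move=> nm; set Bp := map_mx polyC B; set Bp' := map_mx polyC B'.
have cBB' : char_poly_mx (B *m B') = 'X%:M - Bp *m Bp' by rewrite /char_poly_mx map_mxM.
have cB'B : char_poly_mx (B' *m B) = 'X%:M - Bp' *m Bp by rewrite /char_poly_mx map_mxM.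
pose L := block_mx ('X%:M : 'M_m) Bp Bp' (1%:M : 'M_n).
have E1 : L *m block_mx 1%:M 0 (- Bp') 1%:M =
          block_mx (char_poly_mx (B *m B')) Bp 0 1%:M.
  by rewrite mulmx_block cBB' !mulmx1 !mulmx0 !mul1mx !add0r mulmxN addrN.
have E2 : block_mx 1%:M 0 (- Bp') ('X%:M : 'M_n) *m L =
          block_mx ('X%:M : 'M_m) Bp 0 (char_poly_mx (B' *m B)).
  rewrite mulmx_block cB'B !mul1mx !mul0mx !addr0 mulmx1 !mulNmx.
  by rewrite mul_mx_scalar mul_scalar_mx addNr addrC.
have D1 := congr1 determinant E1.
rewrite det_mulmx det_lblock !det1 !mulr1 det_ublock det1 mulr1 in D1.
have D2 := congr1 determinant E2.
rewrite det_mulmx det_lblock det1 mul1r det_ublock !det_scalar in D2.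
apply: (@lreg_lead _ ('X^n)); first by rewrite lead_coefXn; exact: lreg1.
by rewrite /char_poly -D1 D2 mulrCA -exprD subnKC // mulrC.
Qed.

End CharPoly.

Section LogInequalities.
Variable R : realType.

Lemma ln_le_subr1 (x : R) : 0 < x -> ln x <= x - 1.
Proof.
by move=> x0; have := @le_ln1Dx R (x - 1); rewrite addrCA subrr addr0; apply; lra.
Qed.

Lemma ln_le_tangent (a b : R) : 0 < a -> 0 < b -> ln a <= ln b + a / b - 1.
Proof.
move=> a0 b0; rewrite -addrA -lerBlDl -ln_div ?posrE //.
by apply: ln_le_subr1; rewrite divr_gt0.
Qed.

Lemma ln_prod (I : eqType) (r : seq I) (F : I -> R) : {in r, forall i, 0 < F i} ->
  ln (\prod_(i <- r) F i) = \sum_(i <- r) ln (F i).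
Proof.
elim: r => [|i r IH] F0; first by rewrite !big_nil ln1.
have Fr : {in r, forall j, 0 < F j} by move=> j jr; apply: F0; rewrite inE jr orbT.
rewrite !big_cons lnM ?posrE ?IH ?F0 ?mem_head //.
by rewrite big_seq_cond prodr_gt0 // => j /andP[/Fr].
Qed.

Section ConvexCombination.
Variables (n : nat) (w g : 'I_n -> R).
Hypotheses (w_ge0 : forall k, 0 <= w k) (w_sum1 : \sum_k w k = 1).
Hypothesis g_gt0 : forall k, 0 < g k.

Lemma convex_comb_gt0 : 0 < \sum_k w k * g k.
Proof.
have wg_ge0 k : 0 <= w k * g k by rewrite mulr_ge0 // ltW.
rewrite lt_def sumr_ge0 ?andbT //; apply/eqP => /(psumr_eq0P (fun k _ => wg_ge0 k)) wg0.
move: w_sum1; rewrite big1 => [/eqP|k _]; first by rewrite eq_sym oner_eq0.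
by have /eqP := wg0 k isT; rewrite mulf_eq0 (gt_eqF (g_gt0 k)) orbF => /eqP.
Qed.

Lemma ln_convex_comb : \sum_k w k * ln (g k) <= ln (\sum_k w k * g k).
Proof.
set h := \sum_k w k * g k; have h0 : 0 < h := convex_comb_gt0.
have : \sum_k w k * ln (g k) <= \sum_k w k * (ln h + g k / h - 1).
  by apply: ler_sum => k _; apply: ler_wpM2l => //; exact: ln_le_tangent.
suff -> : \sum_k w k * (ln h + g k / h - 1) = ln h by [].
rewrite (eq_bigr (fun k => w k * ln h + (w k * g k) / h - w k)) => [|k _]; last first.
  by rewrite mulrBr mulr1 mulrDr mulrA.
by rewrite sumrB big_split /= -!mulr_suml w_sum1 mul1r divff ?gt_eqF // addrK.
Qed.

Lemma ln_addr_le_convex_comb (d t : R) : 0 < d + t ->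
  ln (d + t) <= d * \sum_k w k * g k + \sum_k w k * (t * g k - ln (g k)) - 1.
Proof.
move=> dt0; set h := \sum_k w k * g k; have h0 : 0 < h := convex_comb_gt0.
have tangent := ln_le_subr1 (mulr_gt0 dt0 h0); rewrite lnM ?posrE // in tangent.
have jensen := ln_convex_comb.
have -> : \sum_k w k * (t * g k - ln (g k)) = t * h - \sum_k w k * ln (g k).
  by rewrite /h mulr_sumr -sumrB; apply: eq_bigr => k _; rewrite mulrBr mulrCA.
by move: tangent jensen; rewrite mulrDl; lra.
Qed.

End ConvexCombination.

Lemma ln_tangent_gap (g t tau : R) : 0 < g <= tau^-1 -> t <= tau ->
  t / tau + ln tau <= t * g - ln g.
Proof.
case/andP=> g0 g_le ttau; have tau0 : 0 < tau by rewrite -invr_gt0 (lt_le_trans g0).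
have tangent := ln_le_subr1 (mulr_gt0 g0 tau0); rewrite lnM ?posrE // in tangent.
have : 0 <= (tau^-1 - g) * (tau - t) by rewrite mulr_ge0 // subr_ge0.
rewrite mulrBl mulrBr mulrBr mulVf ?gt_eqF // [t / tau]mulrC.
by move: tangent; rewrite [g * tau]mulrC; lra.
Qed.

Lemma ln_shift_le (a d : R) : 0 < a -> 0 < d -> a / (a + d) + ln (a + d) - 1 <= ln a + d / a.
Proof.
move=> a0 d0; have ad0 : 0 < a + d by rewrite ltr_wpDr ?ltW.
have : a / (a + d) <= 1 by rewrite ler_pdivrMr ?mul1r ?lerDl ?ltW.
have := ln_le_tangent ad0 a0; rewrite mulrDl divff ?gt_eqF //; lra.
Qed.

Definition doubly_stochastic n (P : 'I_n -> 'I_n -> R) :=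
  [/\ forall k j, 0 <= P k j, forall j, \sum_k P k j = 1 & forall k, \sum_j P k j = 1].

(* Each ln (d j + t) is bounded through the P-average of g (Jensen and
   ln x <= x - 1); the row mass of P outside J is paid for by [ln_tangent_gap]. *)
Lemma sum_ln_le_doubly_stochastic n (J : {set 'I_n}) (P : 'I_n -> 'I_n -> R)
    (d g : 'I_n -> R) (t tau : R) :
  doubly_stochastic P -> (forall j, 0 <= d j) -> (forall j, j \in J -> 0 < d j + t) ->
  (forall k, 0 < g k <= tau^-1) -> t <= tau ->
  \sum_(j in J) ln (d j + t) <=
  \sum_k \sum_j g k * P k j * d j + \sum_k (t * g k - ln (g k))
  - #|J|%:R - (n%:R - #|J|%:R) * (t / tau + ln tau).
Proof.
case=> P_ge0 P_col P_row d_ge0 dJ g_bd ttau.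
have g0 k : 0 < g k by case/andP: (g_bd k).
pose a k := t * g k - ln (g k); pose th := t / tau + ln tau.
pose w k := \sum_(j in J) P k j.
have per_j j : j \in J ->
    ln (d j + t) <= d j * \sum_k P k j * g k + \sum_k P k j * a k - 1.
  by move=> jJ; apply: ln_addr_le_convex_comb => //; exact: dJ.
have sum_J : \sum_(j in J) ln (d j + t) <=
    \sum_(j in J) d j * (\sum_k P k j * g k) + \sum_k w k * a k - #|J|%:R.
  have swap : \sum_(j in J) \sum_k P k j * a k = \sum_k w k * a k.
    by rewrite exchange_big; apply: eq_bigr => k _; rewrite /w mulr_suml.
  by apply: le_trans (ler_sum _ per_j) _; rewrite sumrB big_split /= sumr_const swap.
have drop_J : \sum_(j in J) d j * (\sum_k P k j * g k) <= \sum_k \sum_j g k * P k j * d j.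
  have term_ge0 j : 0 <= d j * \sum_k P k j * g k.
    by rewrite mulr_ge0 // sumr_ge0 // => k _; rewrite mulr_ge0 // ltW.
  rewrite exchange_big [X in _ <= X](eq_bigr (fun j => d j * \sum_k P k j * g k)).
    by rewrite [X in _ <= X](bigID (mem J)) /= lerDl sumr_ge0.
  by move=> j _; rewrite mulr_sumr; apply: eq_bigr => k _; ring.
have weights : \sum_k w k * a k <= \sum_k a k - n%:R * th + #|J|%:R * th.
  have sum_w : \sum_k w k = #|J|%:R.
    by rewrite exchange_big /= (eq_bigr (fun _ => 1)) ?sumr_const.
  have -> : \sum_k w k * a k = \sum_k w k * (a k - th) + #|J|%:R * th.
    by rewrite -sum_w mulr_suml -big_split /=; apply: eq_bigr => k _; rewrite -mulrDr subrK.
  have -> : \sum_k a k - n%:R * th = \sum_k (a k - th).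
    by rewrite [RHS]sumrB sumr_const card_ord mulr_natl.
  rewrite lerD2r.
  apply: ler_sum => k _; rewrite ler_piMl ?subr_ge0 ?ln_tangent_gap //.
  by rewrite -(P_row k) [X in _ <= X](bigID (mem J)) lerDl sumr_ge0.
by move: sum_J drop_J weights; rewrite /a /th; lra.
Qed.

End LogInequalities.

Section Spectrum.
Variable R : realType.
Local Notation C := R[i].
Local Notation toC := (real_complex R).
Local Notation MC := (map_mx toC).
Local Notation geR := (fun a b : R => b <= a).

Lemma symmetric_hermsym n (Y : 'M[R]_n) : symmetric_mx Y -> MC Y \is hermsymmx.
Proof.
move=> sY; apply: realsym_hermsym.
  apply/eqP; rewrite expr0 scale1r; apply/matrixP => i j.
  by rewrite !mxE -[in LHS]sY mxE.
by apply/mxOverP => i j; rewrite mxE; apply/complex_realP; exists (Y i j).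
Qed.

Lemma symmetric_unitary_diag n (Y : 'M[R]_n) : symmetric_mx Y ->
  exists (U : 'M[C]_n) (r : 'I_n -> R),
    U \is unitarymx /\ MC Y = (U ^t* *m diag_mx (\row_j toC (r j)) *m U)%sesqui.
Proof.
move=> sY; have hY := symmetric_hermsym sY.
have /orthomx_spectralP E := hermitian_normalmx hY.
have /mxOverP diag_real := hermitian_spectral_diag_real hY.
exists (spectralmx (MC Y)), (fun j => complex.Re (spectral_diag (MC Y) 0 j)).
split; first exact: spectral_unitarymx.
rewrite {1}E invmx_unitary ?spectral_unitarymx //; congr (_ *m _ *m _).
by congr diag_mx; apply/rowP => j; rewrite mxE RRe_real.
Qed.

Lemma unitary_tmulmx n (U : 'M[C]_n) : U \is unitarymx -> (U ^t* *m U)%sesqui = 1%:M.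
Proof. by move=> Uu; have := mulmxKtV 1%:M Uu erefl; rewrite mul1mx. Qed.

Lemma char_poly_unitary_diag n (Y : 'M[R]_n) (U : 'M[C]_n) (r : 'I_n -> R) :
  U \is unitarymx -> MC Y = (U ^t* *m diag_mx (\row_j toC (r j)) *m U)%sesqui ->
  char_poly Y = \prod_(j < n) ('X - (r j)%:P).
Proof.
move=> Uu EY; apply: (@map_poly_inj _ _ toC).
rewrite map_char_poly EY char_poly_conj ?unitary_tmulmx // char_poly_diag rmorph_prod.
by apply: eq_bigr => j _; rewrite mxE rmorphB /= map_polyX map_polyC.
Qed.

Lemma spectrum_uniq n (X : 'M[R]_n) l1 l2 : spectrum X l1 -> spectrum X l2 -> l1 = l2.
Proof.
case=> _ sorted1 char1 [_ sorted2 char2]; apply: (@sorted_eq _ geR) => //.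
- by move=> b a c ba cb; exact: le_trans cb ba.
- by move=> a b /andP[ba ab]; apply/le_anti; rewrite ab ba.
- by apply: prod_XsubC_eq; rewrite -char1 -char2.
Qed.

Lemma spectrum_sort n (X : 'M[R]_n) (r : 'I_n -> R) :
  char_poly X = \prod_(j < n) ('X - (r j)%:P) ->
  spectrum X (sort geR [seq r j | j <- enum 'I_n]).
Proof.
move=> cX; split.
- by rewrite size_sort size_map size_enum_ord.
- by apply: sort_sorted => a b; rewrite le_total.
- by rewrite cX (perm_big _ (permEl (perm_sort _ _))) /= big_map big_enum.
Qed.

Lemma spectrum_eigs n (Y : 'M[R]_n) : symmetric_mx Y -> spectrum Y (eigs Y).
Proof.
move=> sY; have [U [r [Uu EY]]] := symmetric_unitary_diag sY.
by apply: xgetPex; exists (sort geR [seq r j | j <- enum 'I_n]);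
  apply/spectrum_sort/(char_poly_unitary_diag Uu EY).
Qed.

Lemma eigs_unitary_diag n (Y : 'M[R]_n) : symmetric_mx Y ->
  exists r : 'I_n -> R, perm_eq (eigs Y) [seq r j | j <- enum 'I_n] /\
    (exists2 U : 'M[C]_n, U \is unitarymx &
       MC Y = (U ^t* *m diag_mx (\row_j toC (r j)) *m U)%sesqui).
Proof.
move=> sY; have [U [r [Uu EY]]] := symmetric_unitary_diag sY.
have sp := spectrum_sort (char_poly_unitary_diag Uu EY).
exists r; split; last by exists U.
by rewrite (spectrum_uniq (spectrum_eigs sY) sp) perm_sort.
Qed.

Lemma spectrum_root n (Y : 'M[R]_n) l x : spectrum Y l -> x \in l -> root (char_poly Y) x.
Proof. by case=> _ _ ->; rewrite root_prod_XsubC. Qed.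

Lemma mulmx_tr_gt0 n (v : 'rV[R]_n) : v != 0 -> 0 < (v *m v^T) 0 0.
Proof.
move=> v0; have [i vi] : exists i, v 0 i != 0.
  apply/existsP; apply: contraR v0 => /existsPn v_eq0; apply/eqP/rowP => i.
  by rewrite mxE; apply/eqP; move: (v_eq0 i); rewrite negbK.
rewrite mxE (bigD1 i) //= ltr_pwDl ?sumr_ge0 // => [|j _].
  by rewrite mxE lt0r mulf_neq0 //= -expr2 sqr_ge0.
by rewrite mxE -expr2 sqr_ge0.
Qed.

Lemma mulmx_tr_ge0 n (v : 'rV[R]_n) : 0 <= (v *m v^T) 0 0.
Proof. by rewrite mxE sumr_ge0 // => i _; rewrite mxE -expr2 sqr_ge0. Qed.

Lemma psd_mulmx_tr m k (B : 'M[R]_(m, k)) : psd (B *m B^T).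
Proof.
split=> [|v]; first by rewrite /symmetric_mx trmx_mul trmxK.
have -> : v^T *m (B *m B^T) *m v = (v^T *m B) *m (v^T *m B)^T.
  by rewrite trmx_mul trmxK !mulmxA.
exact: mulmx_tr_ge0.
Qed.

Lemma psd_tr_mulmx m k (B : 'M[R]_(m, k)) : psd (B^T *m B).
Proof. by have := psd_mulmx_tr B^T; rewrite trmxK. Qed.

Lemma root_char_poly_quad n (Y : 'M[R]_n) x : root (char_poly Y) x ->
  exists2 v : 'rV[R]_n, v != 0 & (v *m Y *m v^T) 0 0 = x * (v *m v^T) 0 0.
Proof.
rewrite -eigenvalue_root_char => /eigenvalueP [v vY v0]; exists v => //.
by rewrite vY -scalemxAl mxE.
Qed.

Lemma psd_eig_ge0 n (Y : 'M[R]_n) l x : psd Y -> spectrum Y l -> x \in l -> 0 <= x.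
Proof.
move=> [_ Y_ge0] sp /(spectrum_root sp) /root_char_poly_quad [v v0 E].
by have := Y_ge0 v^T; rewrite trmxK E pmulr_lge0 ?mulmx_tr_gt0.
Qed.

Lemma pd_addr_root_gt0 n (K : 'M[R]_n) t x :
  pd (K + t%:M) -> root (char_poly K) x -> 0 < x + t.
Proof.
move=> [_ Kt_gt0] /root_char_poly_quad [v v0 E].
have vT0 : v^T != 0 by rewrite -trmx0 (inj_eq trmx_inj).
have := Kt_gt0 v^T vT0; rewrite trmxK mulmxDr mulmxDl mxE E mul_mx_scalar -scalemxAl.
by rewrite [X in _ + X]mxE -mulrDl pmulr_lgt0 ?mulmx_tr_gt0.
Qed.

End Spectrum.

Section Majorant.
Variable R : realType.
Local Notation C := R[i].
Local Notation toC := (real_complex R).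
Local Notation MC := (map_mx toC).
Local Notation Re := (@complex.Re R).
Local Notation Im := (@complex.Im R).

Lemma Re_mul_real (x : C) (y : R) : Re (x * toC y) = Re x * y.
Proof. by case: x => a b /=; simpc. Qed.

Lemma Re_sum (I : Type) (r : seq I) (F : I -> C) :
  Re (\sum_(i <- r) F i) = \sum_(i <- r) Re (F i).
Proof. exact: raddf_sum. Qed.

Lemma mul_conjc (w : C) : w * w^* = toC (Re w ^+ 2 + Im w ^+ 2).
Proof. by rewrite -sqr_normc add_Re2_Im2. Qed.

Lemma Re_trace_realmx n (Gc : 'M[C]_n) (Y : 'M[R]_n) :
  \tr (map_mx Re Gc *m Y) = Re (\tr (Gc *m MC Y)).
Proof.
rewrite /mxtrace Re_sum; apply: eq_bigr => i _; rewrite !mxE Re_sum.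
by apply: eq_bigr => k _; rewrite !mxE Re_mul_real.
Qed.

Definition sqmod_mx n (W : 'M[C]_n) k j := Re (W k j) ^+ 2 + Im (W k j) ^+ 2.

Lemma sqmod_mx1 n (k j : 'I_n) : sqmod_mx 1%:M k j = (k == j)%:R.
Proof. by rewrite /sqmod_mx mxE; case: (k == j); rewrite /= expr0n ?addr0 ?expr1n. Qed.

Lemma doubly_stochastic_sqmod n (W : 'M[C]_n) :
  W \is unitarymx -> doubly_stochastic (sqmod_mx W).
Proof.
have Re1 i : Re ((1%:M : 'M[C]_n) i i) = 1 by rewrite mxE eqxx.
move=> Wu; split=> [k j|j|k]; first by rewrite addr_ge0 ?sqr_ge0.
  have /matrixP /(_ j j) /(congr1 Re) := unitary_tmulmx Wu.
  rewrite mxE Re_sum Re1 => <-.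
  by apply: eq_bigr => k _; rewrite !mxE mulrC mul_conjc.
have /unitarymxP /matrixP /(_ k k) /(congr1 Re) := Wu.
rewrite mxE Re_sum Re1 => <-.
by apply: eq_bigr => j _; rewrite !mxE mul_conjc.
Qed.

Lemma Re_trace_unitary_diag n (U V : 'M[C]_n) (r g : 'I_n -> R) :
  Re (\tr ((V ^t* *m diag_mx (\row_k toC (g k)) *m V) *m
           (U ^t* *m diag_mx (\row_j toC (r j)) *m U)))%sesqui =
  \sum_k \sum_j g k * sqmod_mx (V *m U ^t*)%sesqui k j * r j.
Proof.
set Dg := diag_mx _; set Dr := diag_mx _.
have -> : (V ^t* *m Dg *m V *m (U ^t* *m Dr *m U) =
           V ^t* *m (Dg *m (V *m U ^t*) *m Dr *m U))%sesqui by rewrite !mulmxA.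
rewrite mxtrace_mulC.
have -> : (Dg *m (V *m U ^t*) *m Dr *m U *m V ^t* =
           Dg *m (V *m U ^t*) *m Dr *m (V *m U ^t*) ^t*)%sesqui.
  by rewrite trmx_mul map_mxM trmxCK !mulmxA.
set W := (V *m U ^t*)%sesqui; clearbody W.
rewrite /mxtrace Re_sum; apply: eq_bigr => k _.
rewrite mxE Re_sum; apply: eq_bigr => j _.
rewrite mul_mx_diag mul_diag_mx !mxE /sqmod_mx mulrAC Re_mul_real.
by rewrite -[_ * W k j * _]mulrA mul_conjc -rmorphM.
Qed.

Lemma Phi_eigs_subset n s (Y : 'M[R]_n) (r : 'I_n -> R) t : (s <= n)%N ->
  perm_eq (eigs Y) [seq r j | j <- enum 'I_n] ->
  exists2 J : {set 'I_n}, #|J| = s & Phi s Y t = (\sum_(j in J) elog (r j + t))%E.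
Proof.
move=> sn; have -> : [seq r j | j <- enum 'I_n] = [tuple r j | j < n] by [].
case/tuple_permP => p eigsE.
have inj_p : injective (fun i : 'I_s => p (widen_ord sn i)).
  by move=> i j /perm_inj [] /val_inj.
exists [set p (widen_ord sn i) | i : 'I_s]; first by rewrite card_imset ?card_ord.
rewrite big_imset /= => [|i j _ _ /inj_p //].
rewrite /Phi big_add1 /= big_mkord; apply: eq_bigr => i _.
have i_lt_n : (i < n)%N := leq_trans (ltn_ord i) sn.
rewrite /eigval /= eigsE /= (nth_map (widen_ord sn i)) ?size_enum_ord //.
by rewrite (nth_ord_enum _ (widen_ord sn i)) tnth_mktuple.
Qed.

Lemma Phi_le_trace_unitary_diag n s (Y : 'M[R]_n) (V : 'M[C]_n) (g : 'I_n -> R) (t tau : R) :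
  psd Y -> V \is unitarymx -> (forall k, 0 < g k <= tau^-1) -> t <= tau -> (s <= n)%N ->
  (Phi s Y t <= (Re (\tr ((V ^t* *m diag_mx (\row_k toC (g k)) *m V) *m MC Y))%sesqui
     + \sum_k (t * g k - ln (g k)) - s%:R - (n%:R - s%:R) * (t / tau + ln tau))%:E)%E.
Proof.
move=> psdY Vu g_bd ttau sn.
have [r [eigsY [U Uu EY]]] := eigs_unitary_diag psdY.1.
have r_ge0 j : 0 <= r j.
  by apply: (psd_eig_ge0 psdY (spectrum_eigs psdY.1)); rewrite (perm_mem eigsY) map_f ?mem_enum.
have [J cardJ ->] := Phi_eigs_subset t sn eigsY.
case: (boolP [forall j in J, 0 < r j + t]) => [/forall_inP Jpos | /forall_inPn [j jJ rj]];
  last first.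
  suff -> : (\sum_(j in J) elog (r j + t) = -oo)%E by rewrite leNye.
  by apply/esum_eqNyP; exists j; rewrite mem_index_enum /elog (negbTE rj).
rewrite (eq_bigr (fun j => (ln (r j + t))%:E)) => [|j jJ]; last first.
  by rewrite /elog Jpos.
have Wu : (V *m U ^t*)%sesqui \is unitarymx by rewrite mul_unitarymx ?trmxC_unitary.
rewrite sumEFin lee_fin EY Re_trace_unitary_diag -cardJ.
exact: sum_ln_le_doubly_stochastic (doubly_stochastic_sqmod Wu) r_ge0 Jpos g_bd ttau.
Qed.

Lemma Phi_affine_majorant n s (N : 'M[R]_n) (t tau : R) :
  psd N -> t <= tau -> 0 < tau -> (s <= n)%N ->
  exists (G : 'M[R]_n) (kappa : R),
   (forall Y, psd Y -> (Phi s Y t <= (\tr (G *m Y) + kappa)%:E)%E) /\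
   \tr (G *m N) + kappa = \sum_(x <- eigs N) ((x + t) / (x + tau) + ln (x + tau))
      - s%:R - (n%:R - s%:R) * (t / tau + ln tau).
Proof.
move=> psdN ttau tau0 sn.
have [e [eigsN [V Vu EN]]] := eigs_unitary_diag psdN.1.
have e_ge0 k : 0 <= e k.
  by apply: (psd_eig_ge0 psdN (spectrum_eigs psdN.1)); rewrite (perm_mem eigsN) map_f ?mem_enum.
have etau0 k : 0 < e k + tau by rewrite ltr_wpDl.
pose g k := (e k + tau)^-1.
have g_bd k : 0 < g k <= tau^-1 by rewrite invr_gt0 etau0 lef_pV2 ?posrE //= lerDr.
pose Gc := (V ^t* *m diag_mx (\row_k toC (g k)) *m V)%sesqui.
exists (map_mx Re Gc),
  (\sum_k (t * g k - ln (g k)) - s%:R - (n%:R - s%:R) * (t / tau + ln tau)).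
split=> [Y psdY|]; rewrite Re_trace_realmx !addrA; first exact: Phi_le_trace_unitary_diag.
rewrite EN Re_trace_unitary_diag (unitarymxP Vu); congr (_ - _ - _).
rewrite -big_split /= (perm_big _ eigsN) big_map big_enum /=; apply: eq_bigr => k _.
rewrite (bigD1 k) //= big1 => [|j /negbTE jk]; last by rewrite sqmod_mx1 eq_sym jk mulr0 mul0r.
rewrite sqmod_mx1 eqxx mulr1 addr0 /g lnV ?posrE // opprK addrA.
by rewrite (mulrC t) -mulrDr mulrC.
Qed.

End Majorant.

Section PrincipalSubmatrix.
Variable R : realType.

Definition selmx n (S : {set 'I_n}) : 'M[R]_(#|S|, n) :=
  \matrix_(j, i) (enum_val j == i)%:R.

Lemma mulmx_tr_selmx m n (S : {set 'I_n}) (X : 'M[R]_(m, n)) :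
  X *m (selmx S)^T = \matrix_(i, j) X i (enum_val j).
Proof.
apply/matrixP => i j; rewrite !mxE (bigD1 (enum_val j)) //= big1 => [|l /negbTE lj].
  by rewrite !mxE eqxx mulr1 addr0.
by rewrite !mxE eq_sym lj mulr0.
Qed.

Lemma selmx_mulmx m n (S : {set 'I_n}) (X : 'M[R]_(n, m)) :
  selmx S *m X = \matrix_(j, i) X (enum_val j) i.
Proof.
apply/matrixP => j i; rewrite !mxE (bigD1 (enum_val j)) //= big1 => [|l /negbTE lj].
  by rewrite !mxE eqxx mul1r addr0.
by rewrite !mxE eq_sym lj mul0r.
Qed.

Lemma selmx_mulmx_tr n (S : {set 'I_n}) : selmx S *m (selmx S)^T = 1%:M.
Proof.
by apply/matrixP => j j'; rewrite mulmx_tr_selmx !mxE (inj_eq enum_val_inj).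
Qed.

Lemma principal_submxE n (C : 'M[R]_n) (S : {set 'I_n}) :
  principal_submx C S = selmx S *m C *m (selmx S)^T.
Proof. by apply/matrixP => j j'; rewrite mulmx_tr_selmx selmx_mulmx !mxE. Qed.

Lemma pd_principal_submx n (C : 'M[R]_n) (S : {set 'I_n}) :
  pd C -> pd (principal_submx C S).
Proof.
case=> symC C_gt0; rewrite principal_submxE; split.
  by rewrite /symmetric_mx !trmx_mul trmxK symC mulmxA.
move=> v v0; have := C_gt0 ((selmx S)^T *m v); rewrite trmx_mul trmxK !mulmxA; apply.
apply: contraNneq v0 => /(congr1 (mulmx (selmx S))).
by rewrite mulmxA selmx_mulmx_tr mul1mx mulmx0 => ->.
Qed.

Lemma Mx_indicator n (A : 'M[R]_n) (S : {set 'I_n}) :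
  Mx A (fun i => (i \in S)%:R) = (A *m (selmx S)^T) *m (A *m (selmx S)^T)^T.
Proof.
apply/matrixP => p q; rewrite /Mx summxE mxE.
rewrite (eq_bigr (fun j => A p (enum_val j) * A q (enum_val j))) => [|j _]; last first.
  by rewrite mulmx_tr_selmx !mxE.
rewrite -(big_enum_val (fun i => A p i * A q i)) /= [RHS]big_mkcond /=.
apply: eq_bigr => i _; rewrite !mxE big_ord1 !mxE.
by case: (i \in S); rewrite ?mul1r ?mul0r.
Qed.

Lemma principal_submx_cholesky n (C A : 'M[R]_n) (S : {set 'I_n}) t :
  C - t%:M = A^T *m A ->
  (A *m (selmx S)^T)^T *m (A *m (selmx S)^T) = principal_submx C S - t%:M.
Proof.
move=> chol; rewrite trmx_mul trmxK mulmxA -[_ *m A^T *m A]mulmxA -chol.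
rewrite mulmxBr mulmxBl principal_submxE; congr (_ - _).
by rewrite mul_mx_scalar -scalemxAl selmx_mulmx_tr scalemx1.
Qed.

End PrincipalSubmatrix.

Section Gram.
Variable R : realType.
Local Notation geR := (fun a b : R => b <= a).

Lemma eigs_mulmx_tr n k (B : 'M[R]_(n, k)) : (k <= n)%N ->
  eigs (B *m B^T) = eigs (B^T *m B) ++ nseq (n - k) 0.
Proof.
move=> kn; have psdK := psd_tr_mulmx B; have spK := spectrum_eigs psdK.1.
have [size_nu sorted_nu char_nu] := spK.
apply: spectrum_uniq (spectrum_eigs (psd_mulmx_tr B).1) _; split.
- by rewrite size_cat size_nseq size_nu subnKC.
- have ge_trans : transitive geR by move=> b a c ba cb; exact: le_trans cb ba.
  rewrite sorted_pairwise // pairwise_cat -sorted_pairwise // sorted_nu /=.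
  apply/andP; split; last by elim: (n - k)%N => //= m ->; rewrite andbT all_nseq lexx orbT.
  by apply/allrelP => x y x_nu /nseqP[-> _]; exact: psd_eig_ge0 psdK spK x_nu.
- by rewrite char_poly_mulmxC // char_nu big_cat /= big_nseq subr0 iter_mulr_1.
Qed.

Lemma Phi_mulmx_tr n k (B : 'M[R]_(n, k)) t : (k <= n)%N ->
  {in eigs (B^T *m B), forall x, 0 < x + t} ->
  Phi k (B *m B^T) t = (\sum_(x <- eigs (B^T *m B)) ln (x + t))%:E.
Proof.
move=> kn nu_pos; have [size_nu _ _] := spectrum_eigs (psd_tr_mulmx B).1.
rewrite -sumEFin big_seq (eq_bigr (fun x => elog (x + t))) => [|x xn]; last first.
  by rewrite /elog nu_pos.
rewrite -big_seq (big_nth 0) size_nu /Phi big_add1 /=.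
apply: eq_big_nat => i /andP[_ ik].
by rewrite /eigval eigs_mulmx_tr // nth_cat size_nu ik.
Qed.

End Gram.

Section Envelope.
Variable R : realType.

Lemma Phi_le_Phi_hat n s (X : 'M[R]_n) t : psd X -> (Phi s X t <= Phi_hat s X t)%E.
Proof. by move=> psdX; apply/ereal_infP => _ [f [_ f_ge] <-]; exact: f_ge. Qed.

Lemma Phi_hat_le_majorant n s (X : 'M[R]_n) t (f : 'M[R]_n -> \bar R) :
  concave_on_psd f -> (forall Y, psd Y -> (Phi s Y t <= f Y)%E) ->
  (Phi_hat s X t <= f X)%E.
Proof. by move=> f_cvx f_ge; apply: ge_ereal_inf; exists (f X) => //; exists f. Qed.

Lemma concave_on_psd_affine n (G : 'M[R]_n) kappa :
  concave_on_psd (fun Y => (\tr (G *m Y) + kappa)%:E).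
Proof.
move=> X Y _ _ l _; rewrite -!EFinM -EFinD lee_fin mulmxDr -!scalemxAr.
by rewrite mxtraceD !mxtraceZ; lra.
Qed.

Lemma Phi_hat_mulmx_tr_le n k (B : 'M[R]_(n, k)) t d : (k <= n)%N -> 0 <= t -> 0 < d ->
  {in eigs (B^T *m B), forall x, 0 < x + t} ->
  (Phi_hat k (B *m B^T) t <= (\sum_(x <- eigs (B^T *m B)) (ln (x + t) + d / (x + t)))%:E)%E.
Proof.
move=> kn t0 d0 nu_pos; have [size_nu _ _] := spectrum_eigs (psd_tr_mulmx B).1.
have tau0 : 0 < t + d by rewrite ltr_wpDl.
have ttau : t <= t + d by rewrite lerDl ltW.
have [G [kappa [maj value]]] := Phi_affine_majorant (psd_mulmx_tr B) ttau tau0 kn.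
apply: le_trans (Phi_hat_le_majorant _ (concave_on_psd_affine G kappa) maj) _.
rewrite value lee_fin eigs_mulmx_tr // big_cat /= big_nseq iter_addr_0 !add0r.
rewrite -[_ *+ (n - k)%N]mulr_natl natrB // addrAC addrK.
have -> : k%:R = \sum_(x <- eigs (B^T *m B)) (1 : R).
  by rewrite big_const_seq count_predT iter_addr_0 size_nu.
rewrite -sumrB big_seq [X in _ <= X]big_seq; apply: ler_sum => x xn.
by rewrite addrA; exact: ln_shift_le (nu_pos x xn) d0.
Qed.

Lemma Phi_hat_mulmx_tr n k (B : 'M[R]_(n, k)) t : (k <= n)%N -> 0 <= t ->
  {in eigs (B^T *m B), forall x, 0 < x + t} ->
  Phi_hat k (B *m B^T) t = (\sum_(x <- eigs (B^T *m B)) ln (x + t))%:E.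
Proof.
move=> kn t0 nu_pos; apply/le_anti/andP; split; last first.
  by rewrite -(Phi_mulmx_tr kn nu_pos); exact: Phi_le_Phi_hat (psd_mulmx_tr B).
apply/lee_addgt0Pr => e e0; set K0 := \sum_(x <- eigs (B^T *m B)) (x + t)^-1.
have K0_ge0 : 0 <= K0.
  by rewrite /K0 big_seq sumr_ge0 // => x /nu_pos /ltW; rewrite invr_ge0.
have d0 : 0 < e / (K0 + 1) by rewrite divr_gt0 // ltr_wpDl.
apply: le_trans (Phi_hat_mulmx_tr_le kn t0 d0 nu_pos) _.
rewrite -EFinD lee_fin big_split /= lerD2l -mulr_sumr -/K0 mulrAC.
by rewrite ler_pdivrMr ?ltr_wpDl // ler_pM2l // lerDl.
Qed.

Lemma Phi_hat_indicator n (C A : 'M[R]_n) (S : {set 'I_n}) t :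
  pd C -> 0 <= t -> cholesky_factor (C - t%:M) A ->
  Phi_hat #|S| (Mx A (fun i => (i \in S)%:R)) t = elog (\det (principal_submx C S)).
Proof.
move=> pdC t0 [_ _ chol]; set B := A *m (selmx R S)^T.
have kn : (#|S| <= n)%N by rewrite -[X in (_ <= X)%N]card_ord max_card.
have cholB : B^T *m B = principal_submx C S - t%:M := principal_submx_cholesky S chol.
have pdK : pd (B^T *m B + t%:M) by rewrite cholB subrK; exact: pd_principal_submx.
have spK := spectrum_eigs (psd_tr_mulmx B).1.
have nu_pos x : x \in eigs (B^T *m B) -> 0 < x + t.
  by move=> xn; apply: (pd_addr_root_gt0 pdK); exact: spectrum_root spK xn.
have detE : \det (principal_submx C S) = \prod_(x <- eigs (B^T *m B)) (x + t).
  by rewrite -(subrK t%:M (principal_submx C S)) -cholB; case: spK => _ _ /det_add_scalar.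
have prod_gt0 : 0 < \prod_(x <- eigs (B^T *m B)) (x + t).
  by rewrite big_seq_cond prodr_gt0 // => x /andP[/nu_pos].
by rewrite Mx_indicator Phi_hat_mulmx_tr // detE /elog prod_gt0 ln_prod.
Qed.

End Envelope.

Theorem corollary1 (R : realType) (n s : nat) (C : 'M[R]_n) :
  (1 <= n)%N -> (1 <= s <= n)%N -> pd C ->
  forall t : R, 0 <= t -> t <= lambda_min C ->
  forall A : 'M[R]_n, cholesky_factor (C - t%:M) A ->
  zstar C s = rhs_max A s t.
Proof.
move=> _ _ pdC t t0 _ A chol; rewrite /zstar /rhs_max.
rewrite (reindex (fun b : {ffun 'I_n -> bool} => [set i | b i])) /=; last first.
  apply: onW_bij; exists (fun S : {set 'I_n} => [ffun i => i \in S]) => [b|S].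
    by apply/ffunP => i; rewrite ffunE inE.
  by apply/setP => i; rewrite inE ffunE.
have card_b (b : {ffun 'I_n -> bool}) : #|[set i | b i]| = (\sum_i b i)%N.
  by rewrite -sum1_card big_mkcond /=; apply: eq_bigr => i _; rewrite inE; case: (b i).
apply: eq_big => [b | b /eqP <-]; first by rewrite card_b.
rewrite -(Phi_hat_indicator _ pdC t0 chol); congr Phi_hat.
by apply: eq_bigr => i _; rewrite inE.
Qed.
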